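(* Let $\Lambda$ be an artin algebra, and let $f: X\to Y$ and $f': X'\to Y$ be epimorphisms of $\Lambda$-modules with isomorphic kernels. If there is $h: X\to X'$ with $f=f'h$, then $X'$ is a Riedtmann–Zwara degeneration of $X$.
   Context: Modules are finite length left $\Lambda$-modules. A module $M'$ is a Riedtmann–Zwara degeneration of $M$ if there exist a module $K$ and an exact sequence $0\to K\to K\oplus M\to M'\to 0$. *)

From HB Require Import structures.
From mathcomp Require Import all_boot all_order all_algebra.
Set Implicit Arguments. Unset Strict Implicit. Unset Printing Implicit Defensive.
Import GRing.Theory.
Local Open Scope ring_scope.

Definition is_ideal (R : comNzRingType) (I : R -> Prop) : Prop :=
  I 0 /\ (forall x y, I x -> I y -> I (x + y)) /\ (forall a x, I x -> I (a * x)).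

Definition artinian_ring (R : comNzRingType) : Prop :=
  forall I : nat -> R -> Prop,
    (forall n, is_ideal (I n)) ->
    (forall n x, I n.+1 x -> I n x) ->
    exists N, forall n, (N <= n)%N -> forall x, I n x <-> I N x.

Definition fg_over (R : comNzRingType) (L : algType R) : Prop :=
  exists s : seq L, forall l : L,
    exists c : seq R, size c = size s /\
      l = \sum_(i < size s) c`_i *: s`_i.

Definition artin_algebra (R : comNzRingType) (L : algType R) : Prop :=
  artinian_ring R /\ fg_over L.

Section Modules.
Variable (L : nzRingType).

Definition submodule (M : lmodType L) (S : M -> Prop) : Prop :=
  S 0 /\ forall (a : L) (x y : M), S x -> S y -> S (a *: x + y).

(* S is a maximal proper submodule of T, i.e. T/S is simple. *)
Definition simple_step (M : lmodType L) (S T : M -> Prop) : Prop :=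
  (forall x, S x -> T x) /\ (exists x, T x /\ ~ S x) /\
  forall U : M -> Prop, submodule U ->
    (forall x, S x -> U x) -> (forall x, U x -> T x) ->
    (forall x, U x <-> S x) \/ (forall x, U x <-> T x).

Definition composition_series (M : lmodType L) (n : nat) (C : nat -> M -> Prop)
  : Prop :=
  (forall i, submodule (C i)) /\
  (forall x, C 0%N x <-> x = 0) /\
  (forall x, C n x) /\
  (forall i, (i < n)%N -> simple_step (C i) (C i.+1)).

Definition finite_length (M : lmodType L) : Prop :=
  exists n C, @composition_series M n C.

(* Kernels of f and f' are isomorphic: a map phi restricting to a
   module isomorphism ker f -> ker f'. *)
Definition kernels_isomorphic (X X' Y : lmodType L)
  (f : X -> Y) (f' : X' -> Y) : Prop :=
  exists phi : X -> X',
    [/\ forall x, f x = 0 -> f' (phi x) = 0,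
        forall a x y, f x = 0 -> f y = 0 -> phi (a *: x + y) = a *: phi x + phi y,
        forall x y, f x = 0 -> f y = 0 -> phi x = phi y -> x = y &
        forall x', f' x' = 0 -> exists x, f x = 0 /\ phi x = x'].

Definition epimorphism (X Y : lmodType L) (f : X -> Y) : Prop :=
  forall y, exists x, f x = y.

Definition RZ_degeneration (M M' : lmodType L) : Prop :=
  exists K : lmodType L, finite_length K /\
    exists (i : {linear K -> (K * M)%type}) (p : {linear (K * M)%type -> M'}),
      [/\ injective i, epimorphism p &
          forall z, p z = 0 <-> exists k, i k = z].

End Modules.

From HB Require Import structures.
From mathcomp Require Import all_boot all_order all_algebra.
From Stdlib Require Import Classical.
Import GRing.Theory.
Set Implicit Arguments. Unset Strict Implicit.
Local Open Scope ring_scope.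

(* Let K := ker f and let phi : K -> ker f' be the given isomorphism.  The
   square formed by the inclusion K -> X, the injection phi : K -> X' and h is
   bicartesian: h x lies in ker f' only when x lies in ker f (as f = f' h), and
   X' = ker f' + h X (as f is onto).  Hence, with alpha := phi^-1 h on K,
     0 -> K --(-alpha, incl)--> K (+) X --(phi + h)--> X' -> 0
   is exact, and K has finite length as a submodule of X. *)

Section FiniteLength.
Variable L : nzRingType.

Lemma submodule_add (M : lmodType L) (S : M -> Prop) x y :
  submodule S -> S x -> S y -> S (x + y).
Proof. by move=> [_ SP] Sx Sy; rewrite -[x]scale1r; apply: SP. Qed.

Lemma eq_simple_stepl (M : lmodType L) (S S' T : M -> Prop) :
  (forall x, S x <-> S' x) -> simple_step S T -> simple_step S' T.
Proof.
move=> SS' [ST [[x [Tx nSx]] maxS]]; split; first by move=> y /SS'/ST.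
split; first by exists x; split=> // /SS'.
move=> U sU S'U UT.
have [US|UT'] := maxS U sU (fun y Sy => S'U y (proj1 (SS' y) Sy)) UT.
  by left=> y; rewrite US SS'.
by right.
Qed.

Lemma composition_series_of_chain (M : lmodType L) (D : nat -> M -> Prop) n :
  (forall i, submodule (D i)) -> (forall x, D 0%N x <-> x = 0) ->
  (forall i, (i < n)%N ->
     (forall x, D i x <-> D i.+1 x) \/ simple_step (D i) (D i.+1)) ->
  exists m C, [/\ forall i, submodule (C i), forall x, C 0%N x <-> x = 0,
    forall x, C m x <-> D n x &
    forall i, (i < m)%N -> simple_step (C i) (C i.+1)].
Proof.
move=> sD D0; elim: n => [|n IHn] steps; first by exists 0%N, D.
have [m [C [sC C0 Cm CS]]] := IHn (fun i lt_in => steps i (ltnW lt_in)).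
have [Dn_eq|Dn_simple] := steps n (ltnSn n).
  by exists m, C; split=> // x; rewrite Cm Dn_eq.
exists m.+1, (fun i => if (i <= m)%N then C i else D n.+1); split=> //.
- by move=> i; case: ifP.
- by move=> x; rewrite ltnn.
move=> i /=; rewrite ltnS; case: ltngtP => // [lt_im _|-> _].
  exact: CS.
by apply: eq_simple_stepl Dn_simple => x; rewrite Cm.
Qed.

Section Preimage.
Variables (K X : lmodType L) (g : {linear K -> X}).

Lemma submodule_preimage (S : X -> Prop) :
  submodule S -> submodule (fun k => S (g k)).
Proof.
move=> [S0 SP]; split=> [|a u v Su Sv]; rewrite ?linear0 ?linearP //.
exact: SP.
Qed.

(* For U between the preimages, g U + S lies between S and T; maximality of S
   in T then pins U down. *)
Lemma simple_step_preimage (S T : X -> Prop) :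
  submodule S -> submodule T -> simple_step S T ->
  (forall k, S (g k) <-> T (g k)) \/
  simple_step (fun k => S (g k)) (fun k => T (g k)).
Proof.
move=> sS sT [ST [_ maxS]].
have [[k [Tk nSk]]|] := classic (exists k, T (g k) /\ ~ S (g k)); last first.
  move=> noGap; left=> k; split=> [/ST //|Tk].
  by apply: NNPP => nSk; apply: noGap; exists k.
right; split; first by move=> u /ST.
split; first by exists k.
move=> U sU SU UT.
pose V x := exists u c, [/\ U u, S c & x = g u + c].
have sV : submodule V.
  split.
    by exists 0, 0; rewrite linear0 addr0; split=> //; [exact: sU.1|exact: sS.1].
  move=> a _ _ [u1 [c1 [Uu1 Sc1 ->]]] [u2 [c2 [Uu2 Sc2 ->]]].
  exists (a *: u1 + u2), (a *: c1 + c2); split; [exact: sU.2|exact: sS.2|].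
  by rewrite linearP scalerDr addrACA.
have SV x : S x -> V x.
  by exists 0, x; rewrite linear0 add0r; split=> //; exact: sU.1.
have VT x : V x -> T x.
  by move=> [u [c [Uu Sc ->]]]; apply: (submodule_add sT) (UT u Uu) (ST c Sc).
have [VS|VT'] := maxS V sV SV VT; [left|right] => u; split;
  try by [apply: SU|apply: UT].
  by move=> Uu; apply/VS; exists u, 0; rewrite addr0; split=> //; exact: sS.1.
move=> /VT' [u' [c [Uu' Sc gu]]].
have Sdiff : S (g (u - u')) by rewrite linearB gu addrAC subrr add0r.
by rewrite -(subrK u' u); apply: (submodule_add sU) (SU _ Sdiff) Uu'.
Qed.

Lemma finite_length_inj : injective g -> finite_length X -> finite_length K.
Proof.
move=> g_inj [n [C [sC [C0 [Cn CS]]]]].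
have D0 k : C 0%N (g k) <-> k = 0.
  by rewrite C0; split=> [|->]; rewrite ?linear0 // -(linear0 g) => /g_inj.
have [m [C' [sC' C'0 C'm C'S]]] := composition_series_of_chain
  (fun i => submodule_preimage (sC i)) D0
  (fun i lt_in => simple_step_preimage (sC i) (sC i.+1) (CS i lt_in)).
by exists m, C'; do 3!split=> //; move=> k; apply/C'm.
Qed.

End Preimage.
End FiniteLength.

Section Kernel.
Variables (L : nzRingType) (X Y : lmodType L) (f : {linear X -> Y}).

Definition kerp : pred X := fun x => f x == 0.

Lemma kerp_submod_closed : GRing.submod_closed kerp.
Proof.
split=> [|a u v]; rewrite !unfold_in /kerp ?linear0 // linearP.
by move=> /eqP-> /eqP->; rewrite scaler0 addr0.
Qed.

Record kermod := KerMod { kval : X; kvalP : kerp kval }.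
HB.instance Definition _ := [isSub for kval].
HB.instance Definition _ := [Choice of kermod by <:].
HB.instance Definition _ :=
  GRing.SubChoice_isSubLmodule.Build L X kerp kermod kerp_submod_closed.

Lemma kval_ker (k : kermod) : f (val k) = 0.
Proof. exact/eqP/(valP k). Qed.

Lemma kermod_finite_length : finite_length X -> finite_length kermod.
Proof. exact: (finite_length_inj val_inj). Qed.

End Kernel.

Section KernelMaps.
Variables (L : nzRingType) (X X' Y : lmodType L).
Variables (f : {linear X -> Y}) (f' : {linear X' -> Y}).

Section Restriction.
Variables (h : {linear X -> X'}) (fh : f =1 f' \o h).

Fact ker_restrict_subproof (k : kermod f) : kerp f' (h (val k)).
Proof. by apply/eqP; move: (fh (val k)) => /= <-; exact: kval_ker. Qed.

Definition ker_restrict (k : kermod f) : kermod f' :=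
  KerMod (ker_restrict_subproof k).

Lemma ker_restrict_linear : linear ker_restrict.
Proof. by move=> a u v; apply: val_inj; rewrite /= !linearP. Qed.

HB.instance Definition _ :=
  GRing.isLinear.Build L (kermod f) (kermod f') *:%R ker_restrict
    ker_restrict_linear.

End Restriction.

Lemma kernels_isomorphicP : kernels_isomorphic f f' ->
  exists phi : {linear kermod f -> kermod f'}, injective phi /\ epimorphism phi.
Proof.
move=> [phi [phi_ker phi_lin phi_inj phi_surj]].
have phi_val_ker (k : kermod f) : kerp f' (phi (val k)).
  exact/eqP/phi_ker/kval_ker.
pose phiF k := KerMod (phi_val_ker k).
have phiF_linear : linear phiF.
  by move=> a u v; apply: val_inj; rewrite /= phi_lin ?kval_ker.
exists (HB.pack_for {linear kermod f -> kermod f'} phiF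
          (GRing.isLinear.Build _ _ _ _ phiF phiF_linear)); split=> /=.
  move=> u v /(congr1 val) /phi_inj.
  by rewrite !kval_ker => /(_ erefl erefl)/val_inj.
move=> k'; have [x [fx phix]] := phi_surj _ (kval_ker k').
have xK : kerp f x by apply/eqP.
by exists (KerMod xK); apply: val_inj.
Qed.

End KernelMaps.

Lemma linear_inverse (L : nzRingType) (U V : lmodType L) (g : {linear U -> V}) :
  injective g -> epimorphism g ->
  exists g' : {linear V -> U}, cancel g g' /\ cancel g' g.
Proof.
move=> g_inj g_epi.
have g_epiP v : exists u, g u == v by have [u <-] := g_epi v; exists u.
pose g' v := xchoose (g_epiP v).
have g'K : cancel g' g by move=> v; exact/eqP/(xchooseP (g_epiP v)).
have gK : cancel g g' by move=> u; apply: g_inj; rewrite g'K.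
exists (HB.pack_for {linear V -> U} g'
          (GRing.isLinear.Build _ _ _ _ g' (can2_linear gK g'K))).
by split.
Qed.

Section BicartesianSquare.
Variables (L : nzRingType) (K X X' : lmodType L).
Variables (iota : {linear K -> X}) (alpha : {linear K -> K}).
Variables (kappa : {linear K -> X'}) (h : {linear X -> X'}).
Hypotheses (iota_inj : injective iota) (kappa_inj : injective kappa).
Hypothesis square : forall k, h (iota k) = kappa (alpha k).
Hypothesis cover : forall x', exists k x, kappa k + h x = x'.
Hypothesis pullback : forall x k, h x = kappa k -> exists k0, iota k0 = x.

Definition rz_in (k : K) : K * X := (- alpha k, iota k).
Definition rz_out (z : K * X) : X' := kappa z.1 + h z.2.

Lemma rz_in_linear : linear rz_in.
Proof.
by move=> a u v; rewrite /rz_in (linearP alpha) (linearP iota) opprD -scalerN.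
Qed.

Lemma rz_out_linear : linear rz_out.
Proof. by move=> a [u x] [v y]; rewrite /rz_out /= !linearP addrACA scalerDr. Qed.

Lemma rz_in_inj : injective rz_in.
Proof. by move=> u v [_ /iota_inj]. Qed.

Lemma rz_out_epi : epimorphism rz_out.
Proof. by move=> x'; have [k [x <-]] := cover x'; exists (k, x). Qed.

Lemma rz_out_eq0 z : rz_out z = 0 <-> exists k, rz_in k = z.
Proof.
split=> [|[k <-]]; last by rewrite /rz_out /= square linearN addNr.
case: z => k x; rewrite /rz_out /= => /eqP; rewrite addr_eq0 => /eqP kh.
have hx : h x = kappa (- k) by rewrite linearN kh opprK.
have [k0 iota_k0] := pullback hx.
exists k0; rewrite /rz_in iota_k0; congr pair.
by apply: oppr_inj; apply: kappa_inj; rewrite opprK -square iota_k0 hx.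
Qed.

Lemma RZ_degeneration_of_bicartesian_square :
  finite_length K -> RZ_degeneration X X'.
Proof.
move=> flK; exists K; split=> //.
exists (HB.pack_for {linear K -> (K * X)%type} rz_in
          (GRing.isLinear.Build _ _ _ _ rz_in rz_in_linear)).
exists (HB.pack_for {linear (K * X)%type -> X'} rz_out
          (GRing.isLinear.Build _ _ _ _ rz_out rz_out_linear)).
by split; [exact: rz_in_inj|exact: rz_out_epi|exact: rz_out_eq0].
Qed.

End BicartesianSquare.

Theorem proposition8p7 (R : comNzRingType) (Lam : algType R)
  (X X' Y : lmodType Lam)
  (f : {linear X -> Y}) (f' : {linear X' -> Y}) (h : {linear X -> X'}) :
  artin_algebra Lam ->
  finite_length X -> finite_length X' -> finite_length Y ->
  epimorphism f -> epimorphism f' ->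
  kernels_isomorphic f f' ->
  f =1 f' \o h ->
  RZ_degeneration X X'.
Proof.
move=> _ flX _ _ f_epi _ kers_iso fh.
have [phi [phi_inj phi_epi]] := kernels_isomorphicP kers_iso.
have [psi [_ psiK]] := linear_inverse phi_inj phi_epi.
have fhE x : f' (h x) = f x by rewrite fh.
apply: (@RZ_degeneration_of_bicartesian_square _ _ _ _
          val (psi \o ker_restrict fh) (val \o phi) h).
- exact: val_inj.
- exact: inj_comp val_inj phi_inj.
- by move=> k /=; rewrite psiK.
- move=> x'; have [x fx] := f_epi (f' x').
  have xK : kerp f' (x' - h x) by rewrite /kerp linearB fhE fx subrr.
  have [k phik] := phi_epi (KerMod xK).
  by exists k, x; rewrite /= phik subrK.
- move=> x k hx; have xK : kerp f x by rewrite /kerp -fhE hx kval_ker.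
  by exists (KerMod xK).
- exact: kermod_finite_length.
Qed.
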